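(* $N(k,3) = 2k$ for all integers $k \geq 9$.
   Context: A $k$-power is a word of the form $u^k$ (concatenation of $k$ copies of $u$) with $u$ nonempty. A $3$-antipower is a word $u_1u_2u_3$ with $|u_1|=|u_2|=|u_3|$ and $u_1,u_2,u_3$ pairwise distinct. $N(k,r)$ is the smallest integer $\ell$ such that every binary word of length $\ell$ contains either a $k$-power or an $r$-antipower as a factor (contiguous subword). *)

From mathcomp Require Import all_boot.
Set Implicit Arguments. Unset Strict Implicit. Unset Printing Implicit Defensive.

Definition is_power (k : nat) (w : seq bool) : Prop :=
  exists u : seq bool, u != [::] /\ w = flatten (nseq k u).

Definition is_antipower (r : nat) (w : seq bool) : Prop :=
  exists us : seq (seq bool),
    [/\ size us = r,
        (forall u v, u \in us -> v \in us -> size u = size v),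
        uniq us &
        w = flatten us].

Definition has_power_factor (k : nat) (w : seq bool) : Prop :=
  exists v, infix v w /\ is_power k v.
Definition has_antipower_factor (r : nat) (w : seq bool) : Prop :=
  exists v, infix v w /\ is_antipower r v.

Definition forces (k r l : nat) : Prop :=
  forall w : seq bool, size w = l ->
    has_power_factor k w \/ has_antipower_factor r w.

Definition is_N (k r l : nat) : Prop :=
  forces k r l /\ forall l', forces k r l' -> l <= l'.

From mathcomp Require Import all_boot zify.
From Stdlib Require Import Classical.

Set Implicit Arguments.
Unset Strict Implicit.
Unset Printing Implicit Defensive.

(** Upper bound: let w have length 2k >= 12 and contain neither a k-power nor
    a 3-antipower.  An exhaustive check shows that every factor of length 12
    of such a word either alternates or contains six equal letters starting
    at offset at most 6.  Seven or more equal letters flanked on both sides by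
    the other letter always yield a 3-antipower (given two letters of room
    outside).  So the maximal run through six equal letters near the middle
    of w can neither be flanked (being shorter than k, it leaves that room)
    nor reach an end of w (it would have length at least k).  Hence the
    middle window alternates; two consecutive windows overlap enough that a
    run of six in one contradicts alternation in the other, so alternation
    spreads over all of w, which is then the k-power (ab)^k.
    Lower bound: for l < 2k, the prefix of length l of 0^(k-1) 1 0^(k-1) is
    too short for a k-power other than a run of k letters, and has no such
    run; in any three consecutive blocks of equal length, two of them avoid
    the 1 and coincide. *)

Definition slice (T : Type) (s : seq T) i m := take m (drop i s).

Section Slices.

Variable T : eqType.
Implicit Types s v : seq T.

Lemma nth_slice x0 s i m t : t < m -> nth x0 (slice s i m) t = nth x0 s (i + t).
Proof. by move=> lt_tm; rewrite nth_take // nth_drop. Qed.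

Lemma size_slice s i m : i + m <= size s -> size (slice s i m) = m.
Proof. by move=> fit; rewrite size_takel // size_drop; lia. Qed.

Lemma sliceD s i m n : slice s i (m + n) = slice s i m ++ slice s (i + m) n.
Proof. by rewrite /slice takeD drop_drop addnC. Qed.

Lemma slice3 s i m :
  slice s i (3 * m) = slice s i m ++ slice s (i + m) m ++ slice s (i + 2 * m) m.
Proof.
have -> : 3 * m = m + (m + m) by lia.
by rewrite !sliceD -addnA addnn -mul2n.
Qed.

Lemma slice_slice s i j m n : j + m <= n -> slice (slice s i n) j m = slice s (i + j) m.
Proof.
move=> fit; rewrite /slice -(subnK (leq_trans (leq_addr m j) fit)) -take_drop.
by rewrite take_takel ?drop_drop 1?addnC //; lia.
Qed.

Lemma infix_slice s i m : infix (slice s i m) s.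
Proof. by apply/infixP; exists (take i s), (drop m (drop i s)); rewrite !cat_take_drop. Qed.

Lemma slice_of_infix v s :
  infix v s -> exists2 i, i + size v <= size s & v = slice s i (size v).
Proof.
case/infixP=> s1 [s2 ->]; exists (size s1); first by rewrite !size_cat; lia.
by rewrite /slice drop_size_cat // take_size_cat.
Qed.

Lemma slice_neq x0 s i j m t :
  t < m -> nth x0 s (i + t) != nth x0 s (j + t) -> slice s i m != slice s j m.
Proof.
move=> lt_tm; apply: contraNneq => eq_ij.
by rewrite -(nth_slice x0 s i lt_tm) -(nth_slice x0 s j lt_tm) eq_ij.
Qed.

Lemma flatten_nseq1 k (x : T) : flatten (nseq k [:: x]) = nseq k x.
Proof. by elim: k => //= k ->. Qed.

Lemma size_flatten_nseq k s : size (flatten (nseq k s)) = size s * k.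
Proof. by rewrite size_flatten /shape map_nseq sumn_nseq. Qed.

End Slices.

Lemma first_change (P : pred nat) s e :
  (forall t, s <= t < e -> P t) \/
  exists q, [/\ s <= q < e, ~~ P q & forall t, s <= t < q -> P t].
Proof.
elim: e => [|e [P_se|[q [q_in Pq P_sq]]]]; first by left=> t; lia.
- have [le_se|lt_es] := leqP s e; last by left=> t; lia.
  case Pe: (P e); last by right; exists e; split=> //; [lia | rewrite Pe].
  by left=> t t_in; have [->|ne_te] := eqVneq t e; [rewrite Pe | apply: P_se; lia].
- by right; exists q; split=> //; lia.
Qed.

Lemma last_change (P : pred nat) s e :
  (forall t, s <= t < e -> P t) \/
  exists p, [/\ s <= p < e, ~~ P p & forall t, p < t < e -> P t].
Proof.
elim: e => [|e [P_se|[p [p_in Pp P_pe]]]]; first by left=> t; lia.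
- have [le_se|lt_es] := leqP s e; last by left=> t; lia.
  case Pe: (P e); last by right; exists e; split=> [||t]; [lia | rewrite Pe | lia].
  by left=> t t_in; have [->|ne_te] := eqVneq t e; [rewrite Pe | apply: P_se; lia].
- case Pe: (P e); last by right; exists e; split=> [||t]; [lia | rewrite Pe | lia].
  right; exists p; split=> [||t t_in]; [lia | by [] |].
  by have [->|ne_te] := eqVneq t e; [rewrite Pe | apply: P_pe; lia].
Qed.

Definition antipower3_at (w : seq bool) i m :=
  (i + 3 * m <= size w) &&
  uniq [:: slice w i m; slice w (i + m) m; slice w (i + 2 * m) m].

Lemma antipower3P w : has_antipower_factor 3 w <-> exists i m, antipower3_at w i m.
Proof.
split=> [[v [/slice_of_infix[i fit v_slice] [us [size_us eq_size uniq_us v_us]]]]|].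
  case: us size_us eq_size uniq_us v_us => [|u1 [|u2 [|u3 []]]] // _ eq_size.
  (* [eq_size] states lengths at the eqType carrier; a fresh [m] gives lia a single atom. *)
  have [m size1] : exists m, size u1 = m by exists (size u1).
  have [size2 size3] : size u2 = m /\ size u3 = m.
    by rewrite -size1; split; apply: eq_size; rewrite !inE eqxx ?orbT.
  rewrite /= cats0 => uniq_u v_u.
  have size_v : size v = 3 * m by rewrite v_u !size_cat size1 size2 size3; lia.
  rewrite size_v in fit v_slice; exists i, m; apply/andP; split=> //.
  move: v_slice; rewrite v_u slice3 => /eqP.
  rewrite eqseq_cat ?size_slice 1?eqseq_cat ?size_slice //; try lia.
  by case/and3P=> /eqP<- /eqP<- /eqP<-.
case=> i [m /andP[fit uniq3]]; exists (slice w i (3 * m)); split; first exact: infix_slice.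
exists [:: slice w i m; slice w (i + m) m; slice w (i + 2 * m) m]; split=> //.
- move=> u v; rewrite !inE => /or3P[]/eqP-> /or3P[]/eqP->;
  by rewrite !size_slice //; apply: leq_trans fit; lia.
- by rewrite /= cats0 slice3.
Qed.

Definition run (w : seq bool) c s e := forall t, s <= t < e -> nth false w t = c.

Lemma power_of_run w c s k : s + k <= size w -> run w c s (s + k) -> has_power_factor k w.
Proof.
move=> fit run_c; exists (slice w s k); split; first exact: infix_slice.
exists [:: c]; split=> //; rewrite flatten_nseq1.
apply: (@eq_from_nth _ false) => [|t]; rewrite size_slice ?size_nseq // => lt_tk.
by rewrite nth_slice // nth_nseq lt_tk; apply: run_c; lia.
Qed.

Lemma is_power_short k v : size v < 2 * k -> is_power k v -> exists b, v = nseq k b.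
Proof.
move=> short [[|b [|b' u]] [//= _ v_eq]]; first by exists b; rewrite v_eq flatten_nseq1.
by move: short; rewrite v_eq size_flatten_nseq /=; lia.
Qed.

Definition alternating_on (w : seq bool) a b :=
  forall t, a <= t -> t.+1 < b -> nth false w t != nth false w t.+1.

Lemma nth_alternating w t :
  alternating_on w 0 (size w) -> t < size w -> nth false w t = odd t (+) nth false w 0.
Proof.
move=> alt; elim: t => [//|t IH] lt_t; rewrite /= addNb -IH ?(ltnW lt_t) //.
by move: (alt t (leq0n t) lt_t); case: (nth false w t); case: (nth false w t.+1).
Qed.

Lemma nth_flatten_alternating k a t :
  t < 2 * k -> nth false (flatten (nseq k [:: a; ~~ a])) t = odd t (+) a.
Proof. by elim: k t => [|k IH] [|[|t]] //= lt_t; rewrite IH ?negbK //; lia. Qed.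

Lemma alternating_power k w :
  size w = 2 * k -> alternating_on w 0 (size w) -> is_power k w.
Proof.
move=> size_w alt; exists [:: nth false w 0; ~~ nth false w 0]; split=> //.
apply: (@eq_from_nth _ false) => [|t lt_t]; first by rewrite size_flatten_nseq size_w mulnC.
by rewrite nth_flatten_alternating -?size_w // nth_alternating.
Qed.

(* The blocks have length (q - p) %/ 3 + 1, so the three of them just cover
   [p, q]: position p and position q fall in the outer blocks while the
   positions facing them in the other blocks lie strictly between p and q. *)
Lemma antipower_of_gap w p q :
  p + 7 <= q < size w -> 2 <= p + (size w - q.+1) ->
  nth false w q = nth false w p ->
  (forall t, p < t < q -> nth false w t != nth false w p) ->
  has_antipower_factor 3 w.
Proof.
move=> /andP[far lt_q] room w_qp w_between; apply/antipower3P.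
have [m m_lo m_hi] : exists2 m, q - p < 3 * m & 3 * m <= q - p + 3.
  by exists ((q - p) %/ 3).+1; lia.
have [i [i_p q_i i_fit]] : exists i, [/\ i <= p, q < i + 3 * m & i + 3 * m <= size w].
  by exists (p - minn p (3 * m - (q - p).+1)); split; lia.
exists i, m; apply/andP; split=> //.
rewrite /= !inE negb_or andbT -andbA; apply/and3P; split.
- apply: (slice_neq (x0 := false) (t := p - i)); first lia.
  by rewrite addnAC subnKC // eq_sym; apply: w_between; lia.
- apply: (slice_neq (x0 := false) (t := p - i)); first lia.
  by rewrite addnAC subnKC // eq_sym; apply: w_between; lia.
- apply: (slice_neq (x0 := false) (t := q - (i + 2 * m))); first lia.
  rewrite subnKC; last lia.
  by rewrite (_ : i + m + _ = q - m) ?w_qp; [apply: w_between|]; lia.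
Qed.

Fixpoint bool_words n : seq (seq bool) :=
  if n is n'.+1 then
    [seq false :: x | x <- bool_words n'] ++ [seq true :: x | x <- bool_words n']
  else [:: [::]].

Lemma mem_bool_words x : x \in bool_words (size x).
Proof. by elim: x => //= b x IH; rewrite mem_cat; case: b; rewrite map_f ?orbT. Qed.

Definition window12_check (x : seq bool) :=
  [|| has (fun j => has (antipower3_at x j) (iota 0 5)) (iota 0 12),
      all (fun t => nth false x t != nth false x t.+1) (iota 0 11)
    | has (fun t => all (fun u => nth false x u == nth false x t) (iota t 6)) (iota 0 7)].

Lemma window12_check_all : all window12_check (bool_words 12).
Proof. by vm_compute. Qed.

Lemma antipower3_at_slice w i n j m :
  i + n <= size w -> antipower3_at (slice w i n) j m -> antipower3_at w (i + j) m.
Proof.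
move=> fit /andP[]; rewrite size_slice // => fit_j.
rewrite !slice_slice ?(addnA i j); try lia.
by move=> uniq3; apply/andP; split=> //; lia.
Qed.

Lemma window12 w i : i + 12 <= size w ->
  [\/ has_antipower_factor 3 w, alternating_on w i (i + 12)
    | exists c t, t <= 6 /\ run w c (i + t) (i + t + 6)].
Proof.
move=> fit; have := mem_bool_words (slice w i 12); rewrite size_slice //.
move=> /(allP window12_check_all) /or3P[].
- case/hasP=> j _ /hasP[m _ /(antipower3_at_slice fit) ap].
  by apply: Or31; apply/antipower3P; exists (i + j), m.
- move/allP=> alt; apply: Or32 => t le_it lt_t.
  have := alt (t - i); rewrite mem_iota !nth_slice ?addnS ?subnKC //; try lia.
  by apply; lia.
- case/hasP=> t; rewrite mem_iota => /andP[_ lt_t] /allP const.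
  apply: Or33; exists (nth false w (i + t)), t; split=> [|u u_in]; first lia.
  have := const (u - i); rewrite mem_iota !nth_slice ?subnKC //; try lia.
  by move=> /(_ _)/eqP; apply; lia.
Qed.

Lemma nat_propagate (P : nat -> Prop) n i0 :
  i0 <= n -> P i0 -> (forall i, i < n -> P i <-> P i.+1) -> forall i, i <= n -> P i.
Proof.
move=> le_i0n P_i0 step.
have P0 : P 0.
  suff P_down d : d <= i0 -> P (i0 - d) by rewrite -(subnn i0); apply: P_down.
  elim: d => [|d IH] le_d; first by rewrite subn0.
  apply/(step _ _).2; first lia.
  by rewrite (_ : (i0 - d.+1).+1 = i0 - d); [apply: IH|]; lia.
by elim=> [//|i IH] le_in; apply/(step i _).1/IH; lia.
Qed.

Section Upper.

Variables (k : nat) (w : seq bool).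
Hypotheses (k_ge6 : 6 <= k) (size_w : size w = 2 * k).
Hypothesis no_antipower : ~ has_antipower_factor 3 w.
Hypothesis no_long_run : forall c s, s + k <= size w -> ~ run w c s (s + k).

Lemma no_middle_run c t : k - 6 <= t <= k -> ~ run w c t (t + 6).
Proof.
move=> t_mid run6.
have [run_right|[q [/andP[le_tq lt_q] w_q run_tq]]] :=
  first_change (fun u => nth false w u == c) t (size w).
  by apply: (@no_long_run c t); [lia | move=> u u_in; apply/eqP/run_right; lia].
have far_q : t + 6 <= q.
  by rewrite leqNgt; apply/negP => lt_q6; rewrite run6 ?eqxx in w_q; lia.
have [run_left|[p [/andP[_ lt_pt] w_p run_pt]]] :=
  last_change (fun u => nth false w u == c) 0 t.
  apply: (@no_long_run c 0); first lia.
  move=> u u_in; apply/eqP.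
  by have [lt_ut|le_tu] := ltnP u t; [apply: run_left|apply: run_tq]; lia.
have run_pq u : p < u < q -> nth false w u = c.
  move=> u_in; apply/eqP.
  by have [lt_ut|le_tu] := ltnP u t; [apply: run_pt|apply: run_tq]; lia.
have short_pq : q <= p + k.
  rewrite leqNgt; apply/negP => long; apply: (@no_long_run c p.+1); first lia.
  by move=> u u_in; apply: run_pq; lia.
have [wp wq] : nth false w p = ~~ c /\ nth false w q = ~~ c.
  by move: w_p w_q; case: (nth false w p); case: (nth false w q); case: (c).
apply: no_antipower; apply: (antipower_of_gap (p := p) (q := q)); rewrite ?wp ?wq //;
  try lia.
by move=> u u_in; rewrite run_pq //; case: (c).
Qed.

Lemma window_alternating i :
  i + 12 <= size w -> alternating_on w i.+1 (i + 9) -> alternating_on w i (i + 12).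
Proof.
move=> fit alt; case: (window12 fit) => [//|//|[c [t [le_t6 run6]]]].
have := alt (i + t).+1; rewrite !run6 ?eqxx //; lia.
Qed.

Lemma middle_window_alternating : alternating_on w (k - 6) (k - 6 + 12).
Proof.
case: (@window12 w (k - 6)) => [|//|//|[c [t [le_t6 run6]]]]; first lia.
by exfalso; apply: (no_middle_run _ run6); lia.
Qed.

Lemma windows_alternating i : i + 12 <= size w -> alternating_on w i (i + 12).
Proof.
move=> fit.
apply: (@nat_propagate (fun j => alternating_on w j (j + 12)) (size w - 12) (k - 6));
  try lia.
  exact: middle_window_alternating.
move=> j lt_j; split=> alt; apply: window_alternating => [|t le_t lt_t];
  by try apply: alt; lia.
Qed.

Lemma alternating_word : alternating_on w 0 (size w).
Proof.
move=> t _ lt_t; apply: (windows_alternating (i := minn t (size w - 12))); lia.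
Qed.

End Upper.

Lemma forces_double k : 6 <= k -> forces k 3 (2 * k).
Proof.
move=> k_ge6 w size_w.
case: (classic (has_antipower_factor 3 w)) => [|no_ap]; [by right | left].
case: (classic (exists c s, s + k <= size w /\ run w c s (s + k))) => [|no_run].
  by case=> c [s [fit r]]; apply: power_of_run r.
exists w; split; first exact: infix_refl.
apply: alternating_power size_w (alternating_word k_ge6 size_w no_ap _).
by move=> c s fit r; apply: no_run; exists c, s.
Qed.

Definition spike k l := mkseq (fun t => t == k.-1) l.

Lemma slice_spike k l i m :
  i + m <= l -> (k.-1 < i) || (i + m <= k.-1) -> slice (spike k l) i m = nseq m false.
Proof.
move=> fit away; apply: (@eq_from_nth _ false) => [|t];
  rewrite size_slice ?size_mkseq ?size_nseq // => lt_tm.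
rewrite nth_slice // nth_mkseq ?nth_nseq ?lt_tm; last lia.
by apply/eqP; lia.
Qed.

Lemma spike_no_antipower k l : ~ has_antipower_factor 3 (spike k l).
Proof.
case/antipower3P=> i [m /andP[]]; rewrite size_mkseq => fit.
have [lt1|ge1] := ltnP k.-1 (i + m).
  rewrite (@slice_spike _ _ (i + m)) ?(@slice_spike _ _ (i + 2 * m)) /=;
  by rewrite ?inE ?eqxx ?andbF //; lia.
rewrite (@slice_spike _ _ i) /=; [|lia..].
have [lt2|ge2] := ltnP k.-1 (i + 2 * m).
  by rewrite (@slice_spike _ _ (i + 2 * m)) ?inE ?eqxx ?orbT //; lia.
by rewrite (@slice_spike _ _ (i + m)) ?inE ?eqxx //=; lia.
Qed.

Lemma spike_no_power k l : 2 <= k -> l < 2 * k -> ~ has_power_factor k (spike k l).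
Proof.
move=> k_ge2 lt_l [v [/slice_of_infix[i fit v_slice] pow_v]].
rewrite size_mkseq in fit.
have [b v_nseq] : exists b, v = nseq k b.
  exact: is_power_short (leq_ltn_trans (leq_trans (leq_addl i _) fit) lt_l) pow_v.
have size_v : size v = k by rewrite v_nseq size_nseq.
have nth_v t : t < k -> (i + t == k.-1) = b.
  move=> lt_tk; have := nth_nseq false k b t; rewrite lt_tk -v_nseq v_slice.
  by rewrite nth_slice ?size_v // nth_mkseq //; lia.
have top : b by rewrite -(nth_v (k.-1 - i)); [apply/eqP|]; lia.
have /eqP e0 : i + 0 == k.-1 by rewrite nth_v //; lia.
have /eqP e1 : i + 1 == k.-1 by rewrite nth_v //; lia.
lia.
Qed.

Lemma not_forces_below k l : 2 <= k -> l < 2 * k -> ~ forces k 3 l.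
Proof.
move=> k_ge2 lt_l forces_l.
case: (forces_l (spike k l) (size_mkseq _ _)).
  exact: spike_no_power.
exact: spike_no_antipower.
Qed.

Theorem theorem7 (k : nat) (hk : 9 <= k) : is_N k 3 (2 * k).
Proof.
split; first by apply: forces_double; lia.
move=> l forces_l; rewrite leqNgt; apply/negP => lt_l.
by apply: (not_forces_below _ lt_l forces_l); lia.
Qed.
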